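(* Let $G=\langle A\cup B\rangle$ be a stable and strongly orbitwise-abelian CS group with periodic rooted group $A$ such that either (i) $A$ has finite exponent, or (ii) the directed group $B$ has finite support. Assume that $B$ is abelian and periodic. If the atomic dynamical system $\Lambda_b$ on $\mathcal P(A)$ is eventually trivial for every $b\in B$, then $G$ is periodic.
   Context: Let $X$ be a nonempty set (possibly infinite) with distinguished letter $0$, $\dot X=X\setminus\{0\}$. $X^*$ is the free monoid on $X$ viewed as a rooted tree; $\mathrm{Aut}(X^* )$ is the group of root-fixing tree automorphisms acting on the right ($gh$ = first $g$ then $h$); sections $g|_u$ are defined by $(u\star v).g=u.g\star v.(g|_u)$; elements of $\mathrm{Sym}(X)$ are identified with rooted automorphisms $(x\star v).\rho=x.\rho\star v$; $\mathrm{St}(1)$ is the first layer stabiliser. A constant spinal (CS) group is $G=\langle A\cup B\rangle$ with $A\le\mathrm{Sym}(X)$ transitive (rooted group) and $B\le\mathrm{St}(1)$ (directed group) such that $b|_0=b$ for all $b\in B$ and the elements $b|_x$ ($b\in B$, $x\in\dot X$) lie in $A$ and generate $A$. $B$ has finite support if each $b\in B$ has $b|_x=\mathrm{id}$ for all but finitely many $x$. A group is periodic if every element has finite order. Notation: $\mathrm{st}_A(0)$ is the stabiliser of $0$; $\mathrm{orb}_c(0)$ the $\langle c\rangle$-orbit of $0$ and $\ell_c(0)$ its length. For $x\in X$ let $\mathrm{mp}_A(0,x)=\{c\in A: 0.c=x\}$ and fix $e_{0\mapsto x}\in\mathrm{mp}_A(0,x)$ with $e_{0\mapsto0}=1_A$.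 For $a\in A$, $x\in X$: $\mathfrak C(a,x)=\{cac^{-1}:c\in\mathrm{mp}_A(0,x)\}$ and $\mathfrak X(a,x)=\bigcup_{c\in\mathfrak C(a,x)}\mathrm{orb}_c(0)\setminus\{0\}$. For $b\in B$, $a\in A$ ($A$ periodic): $\lambda_b(a)=b|_{0.a}\,b|_{0.a^2}\cdots b|_{0.a^{\ell_a(0)-1}}$, $\lambda_b(a,x)=\lambda_b(e_{0\mapsto x}\,a\,e_{0\mapsto x}^{-1})$, and $\Lambda_b:\mathcal P(A)\to\mathcal P(A)$ is the atomic map $\Lambda_b(P)=\bigcup_{a\in P}\{\lambda_b(a,x):x\in X\}$. An atomic map $\Phi$ on $\mathcal P(A)$ is eventually trivial if for every $a\in A$ there is $n$ with $\Phi^m(\{a\})\subseteq\{1_A\}$ for all $m>n$. $G$ is stable if $\lambda_b(c')=\lambda_b(c'')$ for all $b\in B$, $a\in A$, $x\in X$ and $c',c''\in\mathfrak C(a,x)$. $G$ is strongly orbitwise-abelian if $\langle b|_y: y\in\mathfrak X(a,x),\ b\in B\rangle$ is abelian for all $a\in A$, $x\in X$. *)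

From mathcomp Require Import all_boot.
From Stdlib Require Import ClassicalEpsilon.
Set Implicit Arguments. Unset Strict Implicit. Unset Printing Implicit Defensive.

Section CS.
Variable X : Type.
Variable x0 : X.

(* Words of X^* are seq X.  Tree automorphisms act on the right: the
   product g h (first g, then h) is the function h \o g. *)
Definition is_tree_aut (g : seq X -> seq X) : Prop :=
  bijective g /\ (forall w, size (g w) = size w) /\
  (forall u v, take (size u) (g (u ++ v)) = g u).

(* section g|_u : (u v).g = (u.g) (v.(g|_u)) *)
Definition sec (g : seq X -> seq X) (u : seq X) : seq X -> seq X :=
  fun v => drop (size u) (g (u ++ v)).

Definition rooted (r : X -> X) : seq X -> seq X :=
  fun w => match w with [::] => [::] | x :: v => r x :: v end.

Definition perm_of (h : seq X -> seq X) : X -> X := fun z => head z (h [:: z]).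

(* b|_y viewed as an element of Sym(X) *)
Definition secA (b : seq X -> seq X) (y : X) : X -> X := perm_of (sec b [:: y]).

Definition in_St1 (g : seq X -> seq X) : Prop := forall x, g [:: x] = [:: x].
End CS.

Inductive gen {T : Type} (S : (T -> T) -> Prop) : (T -> T) -> Prop :=
| gen_id : gen S id
| gen_mul g s : gen S g -> S s -> gen S (s \o g)
| gen_inv g s s' : gen S g -> S s -> cancel s s' -> cancel s' s -> gen S (s' \o g).

Definition is_subgroup {T : Type} (H : (T -> T) -> Prop) : Prop :=
  H id /\ (forall g h, H g -> H h -> H (h \o g)) /\
  (forall g, H g -> exists g', H g' /\ cancel g g' /\ cancel g' g).

Definition periodic {T : Type} (H : (T -> T) -> Prop) : Prop :=
  forall g, H g -> exists n, 0 < n /\ forall t, iter n g t = t.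

Definition abelian_set {T : Type} (H : (T -> T) -> Prop) : Prop :=
  forall g h, H g -> H h -> forall t, g (h t) = h (g t).

Definition finite_exponent {T : Type} (H : (T -> T) -> Prop) : Prop :=
  exists n, 0 < n /\ forall g, H g -> forall t, iter n g t = t.

Section CSdefs.
Variable X : Type.
Variable x0 : X.

Definition CS_data (A : (X -> X) -> Prop) (B : (seq X -> seq X) -> Prop) : Prop :=
  is_subgroup A /\
  (forall a, A a -> exists a', cancel a a' /\ cancel a' a) /\
  (forall x y, exists a, A a /\ a x = y) /\
  is_subgroup B /\
  (forall b, B b -> is_tree_aut b /\ in_St1 b) /\
  (forall b, B b -> forall w, sec b [:: x0] w = b w) /\
  (forall b x, B b -> x <> x0 ->
     A (secA b x) /\ forall w, sec b [:: x] w = rooted (secA b x) w) /\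
  (forall a, A a <->
     gen (fun a' => exists b x, B b /\ x <> x0 /\ a' = secA b x) a).

Definition CS_group (A : (X -> X) -> Prop) (B : (seq X -> seq X) -> Prop)
  : (seq X -> seq X) -> Prop :=
  gen (fun g => (exists a, A a /\ g = rooted a) \/ B g).

Definition finite_support (B : (seq X -> seq X) -> Prop) : Prop :=
  forall b, B b -> exists s : seq X,
    forall x, ~ List.In x s -> forall w, sec b [:: x] w = w.

Definition ell (c : X -> X) : nat :=
  epsilon (inhabits 0%N) (fun n => 0 < n /\ iter n c x0 = x0 /\
     forall m, 0 < m -> iter m c x0 = x0 -> n <= m).

Definition finv (f : X -> X) : X -> X :=
  fun y => epsilon (inhabits y) (fun z => f z = y).

(* c a c^{-1} (right action: first c, then a, then c^{-1}) *)
Definition conjA (c a : X -> X) : X -> X := fun z => finv c (a (c z)).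

(* lambda_b(a) = b|_{0.a} b|_{0.a^2} ... b|_{0.a^{l-1}} *)
Definition lam (b : seq X -> seq X) (a : X -> X) : X -> X :=
  fun z => foldl (fun z k => secA b (iter k a x0) z) z (iota 1 (ell a).-1).

(* lambda_b(a, x), with e x = e_{0 -> x} *)
Definition lamx (e : X -> X -> X) (b : seq X -> seq X) (a : X -> X) (x : X)
  : X -> X := lam b (conjA (e x) a).

Definition Lam (e : X -> X -> X) (b : seq X -> seq X)
  (P : (X -> X) -> Prop) : (X -> X) -> Prop :=
  fun f => exists a x, P a /\ f = lamx e b a x.

Definition eventually_trivial (A : (X -> X) -> Prop)
  (Phi : ((X -> X) -> Prop) -> ((X -> X) -> Prop)) : Prop :=
  forall a, A a -> exists n, forall m, n < m ->
    forall f, iter m Phi (fun f' => f' = a) f -> forall z, f z = z.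

Definition Cset (A : (X -> X) -> Prop) (a : X -> X) (x : X) : (X -> X) -> Prop :=
  fun f => exists c, A c /\ c x0 = x /\ f = conjA c a.

Definition Xset (A : (X -> X) -> Prop) (a : X -> X) (x : X) : X -> Prop :=
  fun y => exists c, Cset A a x c /\ (exists k, y = iter k c x0) /\ y <> x0.

Definition stable (A : (X -> X) -> Prop) (B : (seq X -> seq X) -> Prop) : Prop :=
  forall b a x c' c'', B b -> A a -> Cset A a x c' -> Cset A a x c'' ->
    forall z, lam b c' z = lam b c'' z.

Definition strongly_orbitwise_abelian (A : (X -> X) -> Prop)
  (B : (seq X -> seq X) -> Prop) : Prop :=
  forall a x, A a ->
    abelian_set (gen (fun f => exists b y, B b /\ Xset A a x y /\ f = secA b y)).

Definition e_choice (A : (X -> X) -> Prop) (e : X -> X -> X) : Prop :=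
  (forall x, A (e x) /\ e x x0 = x) /\ (forall z, e x0 z = z).
End CSdefs.

(* Every element of G is the action of a word in rooted letters a (in A) and directed
   letters b (in B), and we show that every word has finite order, by induction on its
   number of directed letters.  A word without directed letters is an element of A.
   Otherwise rotate the word g to begin with a directed letter and let p, of finite order
   m, be its action on the first level.  The sections of g^m at the vertices of a p-orbit
   of length l are powers of the section word of g^l there, which has at most as many
   directed letters as g, and fewer unless every directed letter of g is read at 0 exactly
   once along the orbit; because g begins with a directed letter, that orbit is the one of
   0.  Finite exponent of A, resp. finite support of B, leaves only finitely many orbits
   with nontrivial sections, so the orders of the sections are uniformly bounded.
   In the remaining case the section word at 0 again begins with a directed letter and has
   the same product beta of directed letters (B is abelian); its rooted letters are
   sections b|_y with y in the orbit of 0, which commute, and this makes its root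
   permutation equal to lambda_beta(p).  Iterating, the root permutations run through
   Lambda_beta^n({p}), hence become trivial, and then the section word acts as beta, which
   has finite order. *)

From Pilot Require Import Defs.
From HB Require Import structures.
From mathcomp Require Import all_boot.
From Stdlib Require Import ClassicalEpsilon FunctionalExtensionality Classical.
Set Implicit Arguments. Unset Strict Implicit. Unset Printing Implicit Defensive.

Section BigComp.
Variable T : Type.

Fixpoint bigcomp (n : nat) (F : nat -> T -> T) : T -> T :=
  if n is n'.+1 then fun t => F n' (bigcomp n' F t) else id.

Definition comm (f g : T -> T) := forall t, f (g t) = g (f t).

Lemma comm_sym f g : comm f g -> comm g f.
Proof. by move=> H t; rewrite H. Qed.

Lemma bigcomp_recl n F t : bigcomp n.+1 F t = bigcomp n (fun i => F i.+1) (F 0 t).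
Proof. by elim: n t => //= n IH t; rewrite IH. Qed.

Lemma eq_bigcomp n F G : (forall i, i < n -> F i =1 G i) -> bigcomp n F =1 bigcomp n G.
Proof. elim: n => //= n IH H t; rewrite H // IH // => i Hi; exact/H/ltnW. Qed.

Lemma bigcomp_id n F : (forall i, i < n -> F i =1 id) -> bigcomp n F =1 id.
Proof. elim: n => //= n IH H t; rewrite H // IH // => i Hi; exact/H/ltnW. Qed.

Lemma comm_bigcomp g n F : (forall i, i < n -> comm g (F i)) -> comm g (bigcomp n F).
Proof. elim: n => //= n IH H t; rewrite H // -IH // => i Hi; exact/H/ltnW. Qed.

Lemma bigcomp_split n F G : (forall i j, i < n -> j < n -> comm (F i) (G j)) ->
  bigcomp n (fun i t => F i (G i t)) =1 bigcomp n F \o bigcomp n G.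
Proof.
elim: n => //= n IH H t; rewrite IH; last by move=> i j Hi Hj; apply: H; exact: ltnW.
congr (F n _); apply: comm_bigcomp => i Hi; apply/comm_sym/H => //; exact: ltnW.
Qed.

Lemma exchange_bigcomp n m (F : nat -> nat -> T -> T) :
  (forall i j i' j', comm (F i j) (F i' j')) ->
  bigcomp n (fun j => bigcomp m (fun i => F i j)) =1
  bigcomp m (fun i => bigcomp n (fun j => F i j)).
Proof.
move=> H; elim: m => [|m IH] t /=; first by rewrite bigcomp_id.
rewrite -IH; have := @bigcomp_split n (F m) (fun j => bigcomp m (F^~ j)) _ t.
apply=> i j _ _; apply: comm_bigcomp => k _; exact: H.
Qed.

Lemma bigcomp_rot1 n (H : nat -> T -> T) : (forall i j, comm (H i) (H j)) ->
  H n =1 H 0 -> bigcomp n (fun j => H j.+1) =1 bigcomp n H.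
Proof.
move=> Hc Hn t; case: n Hn => // n Hn.
rewrite [RHS]bigcomp_recl /= Hn; apply: comm_bigcomp => i _; exact: Hc.
Qed.

Lemma bigcomp_rot n d (H : nat -> T -> T) : (forall i j, comm (H i) (H j)) ->
  (forall j, H (j + n) =1 H j) -> bigcomp n (fun j => H (j + d)) =1 bigcomp n H.
Proof.
move=> Hc Hp; elim: d => [|d IH] t.
  by apply: eq_bigcomp => i _ t'; rewrite addn0.
rewrite -IH -(bigcomp_rot1 (H := fun j => H (j + d))).
- by apply: eq_bigcomp => i _ t'; rewrite addSnnS.
- by move=> i j; apply: Hc.
- by move=> t'; rewrite add0n addnC Hp.
Qed.

Lemma bigcomp_foldl m n F t :
  bigcomp n (fun k => F (m + k)) t = foldl (fun z k => F k z) t (iota m n).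
Proof. by elim: n t => // n IH t; rewrite -addn1 iotaD foldl_cat /= -IH addn1. Qed.

Lemma bigcomp_pred1 n (P : nat -> bool) (b : T -> T) :
  (forall j j', j < n -> j' < n -> P j -> P j' -> j = j') -> (exists2 j, j < n & P j) ->
  bigcomp n (fun j => if P j then b else id) =1 b.
Proof.
elim: n => [|n IH] Hu [j Hj Pj] t //=.
case Pn: (P n).
  rewrite bigcomp_id // => i Hi t'; case Pi: (P i) => //.
  by have := Hu i n (ltnW Hi) (ltnSn n) Pi Pn => E; move: Hi; rewrite E ltnn.
rewrite IH //; first by move=> a b' Ha Hb; apply: Hu; exact: ltnW.
exists j => //; move: Hj; rewrite ltnS leq_eqVlt => /orP [/eqP E|//].
by move: Pn; rewrite -E Pj.
Qed.

Lemma comm_iter (f g : T -> T) j : comm f g -> comm f (iter j g).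
Proof. by move=> H; elim: j => //= j IH t; rewrite H IH. Qed.

Lemma inj_iter (f : T -> T) n : injective f -> injective (iter n f).
Proof. by move=> Hf; elim: n => //= n IH a b /Hf /IH. Qed.

Lemma iter_conj (g h : T -> T) N s :
  iter N (fun t => g (h t)) (g s) = g (iter N (fun t => h (g t)) s).
Proof. by elim: N => //= N ->. Qed.
Lemma iter_period_sub (f : T -> T) m j x : j < m -> iter m f x = x ->
  x = iter (m - j) f (iter j f x).
Proof. by move=> Hj Em; rewrite -iterD subnK ?(ltnW Hj) // Em. Qed.
End BigComp.

Section MinPeriod.
Variable T : eqType.

Definition min_period (p : T -> T) (x : T) (l : nat) :=
  0 < l /\ iter l p x = x /\ forall n, 0 < n -> iter n p x = x -> l <= n.

Lemma min_period_exists p x :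
  (exists n, 0 < n /\ iter n p x = x) -> exists l, min_period p x l.
Proof.
move=> [n [Hn E]].
have ex : exists n, (0 < n) && (iter n p x == x) by exists n; rewrite Hn E eqxx.
case: (ex_minnP ex) => l /andP [Hl /eqP El] Hmin; exists l; split; [|split] => //.
by move=> k Hk Ek; apply: Hmin; rewrite Hk Ek eqxx.
Qed.

Lemma min_period_dvd p x l m : min_period p x l -> iter m p x = x -> l %| m.
Proof.
move=> [Hl [El Hmin]] Em.
have Er : iter (m %% l) p x = x.
  by move: Em; rewrite {1}(divn_eq m l) addnC iterD iterM (iter_fix _ El).
case: (posnP (m %% l)) => [H0|Hpos]; first by rewrite /dvdn H0.
by have := Hmin _ Hpos Er; rewrite leqNgt ltn_mod Hl.
Qed.

Lemma min_period_neq p x l i j : injective p -> min_period p x l -> i < j -> j < l ->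
  iter i p x <> iter j p x.
Proof.
move=> Hp [Hl [El Hmin]] Hij Hjl E.
have E2 : iter i p (iter (j - i) p x) = iter i p x.
  by rewrite -iterD subnKC ?(ltnW Hij) // E.
have := Hmin (j - i); rewrite subn_gt0 Hij => /(_ isT (inj_iter Hp E2)) H.
by have := leq_ltn_trans (leq_subr i j) Hjl; rewrite ltnNge H.
Qed.

Lemma min_period_orbit p x l j : injective p -> min_period p x l ->
  min_period p (iter j p x) l.
Proof.
move=> Hp [Hl [El Hmin]]; split => //; split; first by rewrite -iterD addnC iterD El.
move=> n Hn En; apply: Hmin => //; apply: (inj_iter (n:=j) Hp).
by rewrite -iterD addnC iterD.
Qed.
End MinPeriod.

Lemma sum_ord_gt0 n (F : nat -> nat) : 0 < \sum_(j < n) F j -> exists2 j, j < n & 0 < F j.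
Proof.
rewrite lt0n sum_nat_eq0 negb_forall => /existsP [j]; rewrite -lt0n => Fj.
by exists j.
Qed.

Lemma sum_ord_pred1_le1 l (P : nat -> bool) :
  (forall j j', j < l -> j' < l -> P j -> P j' -> j = j') -> \sum_(j < l) P j <= 1.
Proof.
elim: l => [|l IH] H; first by rewrite big_ord0.
rewrite big_ord_recr /=; case Pl: (P l).
  rewrite big1 // => j _; case Pj: (P j) => //.
  have := H j l (ltnW (ltn_ord j)) (ltnSn l) Pj Pl => E.
  by move: (ltn_ord j); rewrite E ltnn.
rewrite addn0; apply: IH => j j' Hj Hj'; apply: H; exact: ltnW.
Qed.

Section Words.
Variable X : eqType.
Variable x0 : X.
Variables (A : (X -> X) -> Prop) (B : (seq X -> seq X) -> Prop).
Hypothesis A_id : A id.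
Hypothesis A_comp : forall f g, A f -> A g -> A (g \o f).
Hypothesis A_inv : forall f, A f -> exists f', A f' /\ cancel f f' /\ cancel f' f.
Hypothesis B_id : B id.
Hypothesis B_comp : forall f g, B f -> B g -> B (g \o f).
Hypothesis B_inv : forall f, B f -> exists f', B f' /\ cancel f f' /\ cancel f' f.
Hypothesis B_cons : forall b x v, B b -> b (x :: v) = x :: sec b [:: x] v.
Hypothesis B_nil : forall b, B b -> b [::] = [::].
Hypothesis B_sec0 : forall b v, B b -> sec b [:: x0] v = b v.
Hypothesis B_secA : forall b x, B b -> x <> x0 -> A (secA b x).
Hypothesis B_secx : forall b x v, B b -> x <> x0 -> sec b [:: x] v = rooted (secA b x) v.

Inductive letter := LA of (X -> X) | LB of (seq X -> seq X).

Definition letter0 := LA id.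

Definition act_letter (l : letter) : seq X -> seq X :=
  match l with LA a => rooted a | LB b => b end.
Definition perm_letter (l : letter) : X -> X := match l with LA a => a | LB _ => id end.
Definition dir_letter (l : letter) : seq X -> seq X := match l with LA _ => id | LB b => b end.
Definition is_dir (l : letter) : bool := if l is LB _ then true else false.
Definition inAB (l : letter) : Prop := match l with LA a => A a | LB b => B b end.

Fixpoint wordAB (w : seq letter) : Prop :=
  if w is l :: w' then inAB l /\ wordAB w' else True.

Fixpoint fold_word (T : Type) (phi : letter -> T -> T) (w : seq letter) : T -> T :=
  if w is l :: w' then fun t => fold_word phi w' (phi l t) else id.

Notation eval_word := (fold_word act_letter).
Notation root_perm := (fold_word perm_letter).

Definition prefix_perm (w : seq letter) (i : nat) : X -> X := root_perm (take i w).

Definition sec_letter (l : letter) (z : X) : letter :=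
  match l with LA _ => LA id | LB b => if z == x0 then LB b else LA (secA b z) end.

Definition sec_perm (l : letter) (z : X) : X -> X := perm_letter (sec_letter l z).

Fixpoint sec_word (w : seq letter) (x : X) : seq letter :=
  if w is l :: w' then sec_letter l x :: sec_word w' (perm_letter l x) else [::].

(* The section word of [w ^ n] at the vertex [x]. *)
Fixpoint sec_iter (w : seq letter) (n : nat) (x : X) : seq letter :=
  if n is n'.+1 then sec_word w x ++ sec_iter w n' (root_perm w x) else [::].

Definition ndir (w : seq letter) := count is_dir w.

Definition pow_word_id (w : seq letter) N := forall t, iter N (eval_word w) t = t.
Definition periodic_word (w : seq letter) := exists N, 0 < N /\ pow_word_id w N.

Lemma fold_word_cat T (phi : letter -> T -> T) u v t :
  fold_word phi (u ++ v) t = fold_word phi v (fold_word phi u t).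
Proof. by elim: u t => //= l u IH t. Qed.

Lemma fold_word_bigcomp T (phi : letter -> T -> T) u :
  fold_word phi u =1 bigcomp (size u) (fun i => phi (nth letter0 u i)).
Proof. by elim: u => // l u IH t; rewrite [RHS]bigcomp_recl -IH. Qed.

Lemma prefix_perm_bigcomp u i :
  prefix_perm u i =1 bigcomp i (fun k => perm_letter (nth letter0 u k)).
Proof.
elim: u i => [|l u IH] [|i] t //; first by rewrite [RHS]bigcomp_id // => k _ t'; rewrite nth_nil.
by rewrite [RHS]bigcomp_recl -IH.
Qed.

Lemma fold_sec_word T (phi : letter -> T -> T) u x :
  fold_word phi (sec_word u x) =1
  bigcomp (size u) (fun i => phi (sec_letter (nth letter0 u i) (prefix_perm u i x))).
Proof. by elim: u x => // l u IH x t; rewrite [RHS]bigcomp_recl -IH. Qed.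

Lemma fold_sec_iter T (phi : letter -> T -> T) u n x :
  fold_word phi (sec_iter u n x) =1
  bigcomp n (fun j => fold_word phi (sec_word u (iter j (root_perm u) x))).
Proof.
elim: n x => // n IH x t; rewrite [RHS]bigcomp_recl /= fold_word_cat IH.
by apply: eq_bigcomp => j _ t'; rewrite -iterSr.
Qed.

Lemma nth_sec_word u x i : i < size u ->
  nth letter0 (sec_word u x) i = sec_letter (nth letter0 u i) (prefix_perm u i x).
Proof. by elim: u x i => //= l u IH x [|i] //= Hi; rewrite IH. Qed.

Lemma perm_letter_sec_iter (P : (X -> X) -> Prop) u n x : P id ->
  (forall j i, j < n ->
     P (sec_perm (nth letter0 u i) (prefix_perm u i (iter j (root_perm u) x)))) ->
  forall i, P (perm_letter (nth letter0 (sec_iter u n x) i)).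
Proof.
move=> Pid; elim: n x => [|n IH] x H i /=; first by rewrite nth_nil.
rewrite nth_cat; case: ltnP => Hi; last by apply: IH => j i' Hj; rewrite -iterSr; exact: H.
have Hs : size (sec_word u x) = size u by elim: (u) x {H Hi} => //= l u' IHu x; rewrite IHu.
by rewrite nth_sec_word -?Hs //; exact: (H 0).
Qed.

Lemma sec_iter_add w a b x :
  sec_iter w (a + b) x = sec_iter w a x ++ sec_iter w b (iter a (root_perm w) x).
Proof. by elim: a x => // a IH x; rewrite addSn /= IH catA -iterSr. Qed.

Lemma wordAB_cat u v : wordAB (u ++ v) <-> wordAB u /\ wordAB v.
Proof. elim: u => /= [|l u ->]; tauto. Qed.

Lemma wordAB_take u i : wordAB u -> wordAB (take i u).
Proof. elim: u i => //= l u IH [|i] //= [Hl Hu]; split => //; exact: IH. Qed.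

Lemma inAB_nth u i : wordAB u -> inAB (nth letter0 u i).
Proof. by elim: u i => [|l u IH] [|i] //= [Hl /IH]. Qed.

Lemma inAB_sec_letter l x : inAB l -> inAB (sec_letter l x).
Proof. by case: l => [a|b] //= Hb; case: eqP => // /(B_secA Hb). Qed.

Lemma wordAB_sec_word w x : wordAB w -> wordAB (sec_word w x).
Proof. elim: w x => //= l w IH x [Hl Hw]; split; [exact: inAB_sec_letter|exact: IH]. Qed.

Lemma wordAB_sec_iter w n x : wordAB w -> wordAB (sec_iter w n x).
Proof.
move=> Hw; elim: n x => //= n IH x; apply/wordAB_cat.
by split; [exact: wordAB_sec_word|exact: IH].
Qed.

Lemma A_root_perm u : wordAB u -> A (root_perm u).
Proof. by elim: u => //= -[a|b] u IH [Hl Hu]; apply: A_comp (IH Hu). Qed.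

Lemma B_fold_dir u : wordAB u -> B (fold_word dir_letter u).
Proof. by elim: u => //= -[a|b] u IH [Hl Hu] /=; [exact: IH | apply: B_comp (IH Hu)]. Qed.

Lemma A_inj f : A f -> injective f.
Proof. by move=> /A_inv [f' [_ [K _]]]; exact: can_inj K. Qed.

Lemma finv_spec (f : X -> X) (y : X) : A f -> f (Defs.finv f y) = y.
Proof.
move=> /A_inv [f' [_ [_ K]]].
exact: (epsilon_spec (inhabits y) (fun z => f z = y) (ex_intro _ (f' y) (K y))).
Qed.

Lemma finv_f (f : X -> X) (z : X) : A f -> Defs.finv f (f z) = z.
Proof. by move=> Hf; apply: (A_inj Hf); rewrite finv_spec. Qed.

Lemma iter_rooted (a : X -> X) n t : iter n (rooted a) t = rooted (iter n a) t.
Proof. by elim: n t => [|n IH] [|x v] //=; rewrite IH. Qed.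

Lemma act_letter_cons l x v : inAB l ->
  act_letter l (x :: v) = perm_letter l x :: act_letter (sec_letter l x) v.
Proof.
case: l => [a|b] /= H; first by case: v.
by rewrite B_cons //; case: eqP => [->|nx]; rewrite ?B_sec0 ?B_secx.
Qed.

Lemma eval_word_cons w x v : wordAB w ->
  eval_word w (x :: v) = root_perm w x :: eval_word (sec_word w x) v.
Proof. by elim: w x v => //= l w IH x v [Hl Hw]; rewrite act_letter_cons // IH. Qed.

Lemma iter_eval_word_cons w n x v : wordAB w ->
  iter n (eval_word w) (x :: v) = iter n (root_perm w) x :: eval_word (sec_iter w n x) v.
Proof.
move=> Hw; elim: n x v => // n IH x v.
by rewrite !iterSr eval_word_cons // IH /= fold_word_cat.
Qed.

Lemma eval_word_nil u : wordAB u -> eval_word u [::] = [::].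
Proof. by elim: u => // -[a|b] u IH /= [Hl /IH]; rewrite ?(B_nil Hl). Qed.

Lemma eval_word_surj u t : wordAB u -> exists s, eval_word u s = t.
Proof.
elim: u t => /= [|l u IH] t; first by exists t.
move=> [Hl /(IH t) [s1 <-]].
case: l Hl => [a|b] /= H.
  have [a' [_ [_ K]]] := A_inv H; exists (rooted a' s1); case: s1 => //= x v; by rewrite K.
by have [b' [_ [_ K]]] := B_inv H; exists (b' s1); rewrite K.
Qed.

Lemma rooted_word u : wordAB u -> ndir u = 0 ->
  A (root_perm u) /\ eval_word u =1 rooted (root_perm u).
Proof.
elim: u => /= [|l u IH]; first by split => // -[].
case: l => [a|b] //= [Ha Hu] Hc; have [HA HE] := IH Hu Hc.
by split; [exact: A_comp Ha HA | case=> [|x v] /=; rewrite HE].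
Qed.

Lemma pow_word_id_mul u N q : pow_word_id u N -> pow_word_id u (q * N).
Proof. by move=> H t; rewrite iterM iter_fix. Qed.

Lemma pow_word_id_rot u v N : wordAB u -> pow_word_id (u ++ v) N -> pow_word_id (v ++ u) N.
Proof.
move=> Hu H t; have [s <-] := eval_word_surj t Hu.
have E : forall w w', eval_word (w ++ w') =1 eval_word w' \o eval_word w.
  by move=> w w' t'; rewrite fold_word_cat.
rewrite (eq_iter (E v u)) /= iter_conj; congr (eval_word u _).
by rewrite -[RHS](H s) (eq_iter (E u v)).
Qed.

Lemma periodic_word_rot u v : wordAB u -> periodic_word (u ++ v) -> periodic_word (v ++ u).
Proof. by move=> Hu [N [HN H]]; exists N; split => //; exact: pow_word_id_rot. Qed.

Lemma sec_iter_rot w n x : iter n.+1 (root_perm w) x = x ->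
  sec_iter w n.+1 (root_perm w x) = sec_iter w n (root_perm w x) ++ sec_word w x.
Proof. by move=> En; rewrite -addn1 sec_iter_add /= -iterSr En cats0. Qed.

Lemma pow_word_id_sec_iter_orbit w n x N j : wordAB w -> iter n (root_perm w) x = x ->
  pow_word_id (sec_iter w n x) N -> pow_word_id (sec_iter w n (iter j (root_perm w) x)) N.
Proof.
move=> Hw; case: n => [_ H|n En]; first by elim: j.
elim: j => // j IH H; rewrite iterS sec_iter_rot.
  by apply: pow_word_id_rot (IH H); exact: wordAB_sec_word.
by rewrite -iterD addnC iterD En.
Qed.

Lemma ndir_sec_iter_orbit w n x j : iter n (root_perm w) x = x ->
  ndir (sec_iter w n (iter j (root_perm w) x)) = ndir (sec_iter w n x).
Proof.
case: n => [|n] En; first by elim: j.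
elim: j => // j IH; rewrite iterS sec_iter_rot.
  by rewrite -IH /ndir !count_cat addnC.
by rewrite -iterD addnC iterD En.
Qed.

Lemma pow_word_id_sec_iter_mul w l x q N : iter l (root_perm w) x = x ->
  pow_word_id (sec_iter w l x) N -> pow_word_id (sec_iter w (q * l) x) N.
Proof.
move=> El H t.
have E : eval_word (sec_iter w (q * l) x) =1 iter q (eval_word (sec_iter w l x)).
  by elim: q => //= q IH t'; rewrite mulSn sec_iter_add El fold_word_cat IH -iterSr.
by rewrite (eq_iter E) -iterM mulnC iterM iter_fix.
Qed.

Lemma ndir_sum u : ndir u = \sum_(i < size u) is_dir (nth letter0 u i).
Proof. by elim: u => [|l u IH]; rewrite ?big_ord0 // big_ord_recl /= -IH. Qed.

Lemma ndir_sec_word u x :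
  ndir (sec_word u x) = \sum_(i < size u) (is_dir (nth letter0 u i) && (prefix_perm u i x == x0)).
Proof.
elim: u x => [|l u IH] x; first by rewrite big_ord0.
rewrite big_ord_recl /= -IH /ndir /=; congr (_ + _).
by case: l => //= b; case: eqP.
Qed.

Lemma ndir_sec_iter u n x :
  ndir (sec_iter u n x) = \sum_(j < n) ndir (sec_word u (iter j (root_perm u) x)).
Proof.
elim: n x => [|n IH] x; first by rewrite big_ord0.
rewrite big_ord_recl /= /ndir count_cat; have := IH (root_perm u x); rewrite /ndir => ->.
by congr (_ + _); apply: eq_bigr => j _; rewrite -iterS iterSr.
Qed.

(* Along an orbit of length [l] of the root permutation, each directed letter of [u] is
   seen at the vertex [x0] at most once; this bounds the directed letters of sections. *)
Section Count.
Variables (u : seq letter) (f : X) (l : nat).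
Hypothesis Hu : wordAB u.
Hypothesis Hl : min_period (root_perm u) f l.

Let hits i j := is_dir (nth letter0 u i) && (prefix_perm u i (iter j (root_perm u) f) == x0).

Lemma hit_x0_unique i j j' : j < l -> j' < l ->
  prefix_perm u i (iter j (root_perm u) f) = x0 ->
  prefix_perm u i (iter j' (root_perm u) f) = x0 -> j = j'.
Proof.
move=> Hj Hj' E E'.
have Hp := A_inj (A_root_perm Hu).
have Eq : iter j (root_perm u) f = iter j' (root_perm u) f.
  apply: (@A_inj (prefix_perm u i)); last by rewrite E E'.
  exact: A_root_perm (wordAB_take i Hu).
by case: (ltngtP j j') => // Hlt; [case: (min_period_neq Hp Hl Hlt Hj') |
  case: (min_period_neq Hp Hl Hlt Hj)].
Qed.

Lemma ndir_sec_iter_hits : ndir (sec_iter u l f) = \sum_(i < size u) \sum_(j < l) hits i j.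
Proof. by rewrite ndir_sec_iter (eq_bigr _ (fun j _ => ndir_sec_word _ _)) exchange_big. Qed.

Lemma hits_le i : \sum_(j < l) hits i j <= is_dir (nth letter0 u i).
Proof.
rewrite /hits; case: (is_dir _) => /=; last by rewrite big1.
apply: (sum_ord_pred1_le1 (P := fun j => prefix_perm u i (iter j _ f) == x0)).
by move=> j j' Hj Hj' /eqP E /eqP E'; exact: hit_x0_unique E E'.
Qed.

Lemma ndir_sec_iter_le : ndir (sec_iter u l f) <= ndir u.
Proof. by rewrite ndir_sec_iter_hits ndir_sum; apply: leq_sum => i _; exact: hits_le. Qed.

Lemma ndir_sec_iter_eq : ndir (sec_iter u l f) = ndir u ->
  forall i, i < size u -> is_dir (nth letter0 u i) ->
  exists2 j, j < l & prefix_perm u i (iter j (root_perm u) f) = x0.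
Proof.
rewrite ndir_sec_iter_hits ndir_sum => E i Hi Hdir.
have [_] := leqif_sum (P := xpredT) (fun (i : 'I_(size u)) _ => leqif_eq (hits_le i)).
rewrite E eqxx => /esym/forallP/(_ (Ordinal Hi))/eqP /= Hs.
have [j Hj] : exists2 j, j < l & 0 < hits i j by apply: sum_ord_gt0; rewrite Hs Hdir.
by rewrite lt0b => /andP [_ /eqP Ej]; exists j.
Qed.
End Count.

Lemma In_mem (z : X) s : List.In z s -> z \in s.
Proof. by elim: s => //= y s IH [->|/IH]; rewrite in_cons ?eqxx // => ->; rewrite orbT. Qed.

Lemma eval_sec_iter_id u n x :
  (forall j i, j < n -> i < size u ->
     act_letter (sec_letter (nth letter0 u i) (prefix_perm u i (iter j (root_perm u) x))) =1 id) ->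
  eval_word (sec_iter u n x) =1 id.
Proof.
move=> H t; rewrite fold_sec_iter bigcomp_id // => j Hj t'.
by rewrite fold_sec_word bigcomp_id // => i Hi; exact: H.
Qed.

Hypothesis A_per : periodic A.

Section Reduction.
Variable u : seq letter.
Hypothesis Hu : wordAB u.
Let p := root_perm u.

Definition orbit_cover m E (F : seq X) := forall x,
  pow_word_id (sec_iter u m x) E \/ exists2 f, f \in F & exists j, x = iter j p f.

Lemma prefix_perm_hit m x j i : j < m -> iter m p x = x ->
  prefix_perm u i (iter j p x) = x0 -> x = iter (m - j) p (Defs.finv (prefix_perm u i) x0).
Proof.
move=> Hj Em Ei; rewrite -Ei finv_f; first exact: iter_period_sub.
exact: A_root_perm (wordAB_take i Hu).
Qed.

Lemma orbit_cover_exponent m : (forall t, iter m p t = t) -> finite_exponent A ->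
  exists E F, 0 < E /\ orbit_cover m E F.
Proof.
move=> Em [E [HE HEA]]; exists E, [seq Defs.finv (prefix_perm u i) x0 | i <- iota 0 (size u)].
split => // x; case: (posnP (ndir (sec_iter u m x))) => [H0|Hpos].
  have [HA HE'] := rooted_word (wordAB_sec_iter m x Hu) H0.
  by left=> t; rewrite (eq_iter HE') iter_rooted; case: t => //= y v; rewrite HEA.
right; move: Hpos; rewrite ndir_sec_iter.
move=> /(sum_ord_gt0 (F := fun j => ndir (sec_word u (iter j p x)))) [j Hj].
rewrite ndir_sec_word => /(sum_ord_gt0 (F := fun i => is_dir (nth letter0 u i) &&
  (prefix_perm u i (iter j p x) == x0))) [i Hi]; rewrite lt0b => /andP [_ /eqP Ei].
exists (Defs.finv (prefix_perm u i) x0); first by apply/mapP; exists i; rewrite ?mem_iota.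
by exists (m - j); exact: prefix_perm_hit Ei.
Qed.

Lemma sec_letter_support l : finite_support B -> inAB l ->
  exists s : seq X, forall z, z \notin s -> act_letter (sec_letter l z) =1 id.
Proof.
move=> HS; case: l => [a|b] /= Hb; first by exists [::] => z _ [].
have [s Hs] := HS b Hb; exists (x0 :: s) => z; rewrite in_cons negb_or => /andP [/negPf -> Hz].
case=> [|t v] //=; rewrite /secA /perm_of Hs //.
by move=> /In_mem Hin; rewrite Hin in Hz.
Qed.

Lemma orbit_cover_support m : (forall t, iter m p t = t) -> finite_support B ->
  exists F, orbit_cover m 1 F.
Proof.
move=> Em HS.
have /fin_all_exists [S HSi] : forall i : 'I_(size u), exists s : seq X,
    forall z, z \notin s -> act_letter (sec_letter (nth letter0 u i) z) =1 id.
  by move=> i; apply: sec_letter_support => //; exact: inAB_nth.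
exists [seq Defs.finv (prefix_perm u i) z | i : 'I_(size u) <- enum 'I_(size u), z : X <- S i] => x.
case: (classic (exists j i, j < m /\ exists Hi : i < size u,
    prefix_perm u i (iter j p x) \in S (Ordinal Hi))) => [[j [i [Hj [Hi Hin]]]]|Hno].
  right; exists (Defs.finv (prefix_perm u i) (prefix_perm u i (iter j p x))).
    exact: (allpairs_f_dep (fun (i : 'I_(size u)) z => Defs.finv (prefix_perm u i) z)
      (mem_enum _ (Ordinal Hi)) Hin).
  exists (m - j); rewrite finv_f; first exact: iter_period_sub.
  exact: A_root_perm (wordAB_take i Hu).
left=> t /=; apply: eval_sec_iter_id => j i Hj Hi; apply: (HSi (Ordinal Hi)).
by apply/negP => Hin; apply: Hno; exists j, i; split => //; exists Hi.
Qed.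
End Reduction.

Hypothesis Hcase : finite_exponent A \/ finite_support B.

(* One step of the induction on the number of directed letters: only the section at [x0]
   along the orbit of [x0] can keep all directed letters of [u]. *)
Section Step.
Variables (u : seq letter) (b0 : seq X -> seq X) (u' : seq letter).
Hypothesis Hu : wordAB u.
Hypothesis Hform : u = LB b0 :: u'.
Hypothesis IH : forall v, wordAB v -> ndir v < ndir u -> periodic_word v.
Hypothesis Hroot : forall l, min_period (root_perm u) x0 l ->
  ndir (sec_iter u l x0) = ndir u -> periodic_word (sec_iter u l x0).
Let p := root_perm u.

Lemma periodic_sec_iter_min f l : min_period p f l -> periodic_word (sec_iter u l f).
Proof.
move=> Hl; have := ndir_sec_iter_le Hu Hl; rewrite leq_eqVlt => /orP [/eqP E|]; last first.
  by apply: IH; exact: wordAB_sec_iter.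
have [||j Hj Ej] := ndir_sec_iter_eq Hu Hl E (i := 0); try by rewrite Hform.
rewrite /prefix_perm take0 /= in Ej.
have Hl0 : min_period p x0 l.
  by rewrite -Ej; exact: min_period_orbit (A_inj (A_root_perm Hu)) Hl.
have El : iter l p x0 = x0 by case: Hl0 => _ [].
have Ec : ndir (sec_iter u l x0) = ndir u.
  by rewrite -Ej ndir_sec_iter_orbit //; case: Hl => _ [].
have [N [HN HP]] := Hroot Hl0 Ec.
exists N; split => //; have -> : f = iter (l - j) p x0.
  by rewrite -Ej; apply: iter_period_sub Hj _; case: Hl => _ [].
exact: pow_word_id_sec_iter_orbit.
Qed.

Lemma periodic_sec_iter m f : 0 < m -> (forall t, iter m p t = t) ->
  periodic_word (sec_iter u m f).
Proof.
move=> Hm Em; have [l Hl] : exists l, min_period p f l by apply: min_period_exists; exists m.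
have /dvdnP [q ->] := min_period_dvd Hl (Em f).
have [N [HN HP]] := periodic_sec_iter_min Hl; exists N; split => //.
by apply: pow_word_id_sec_iter_mul => //; case: Hl => _ [].
Qed.

Lemma periodic_sec_iter_seq m (F : seq X) : 0 < m -> (forall t, iter m p t = t) ->
  exists N, 0 < N /\ forall f, f \in F -> pow_word_id (sec_iter u m f) N.
Proof.
move=> Hm Em; elim: F => [|f F [N [HN HF]]]; first by exists 1.
have [Nf [HNf Hf]] := periodic_sec_iter f Hm Em.
exists (N * Nf); split; first by rewrite muln_gt0 HN.
move=> g; rewrite in_cons => /orP [/eqP ->|Hg]; first exact: pow_word_id_mul.
by rewrite mulnC; apply: pow_word_id_mul; apply: HF.
Qed.

Lemma periodic_of_orbit_cover m E F : 0 < m -> (forall t, iter m p t = t) -> 0 < E ->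
  orbit_cover u m E F -> periodic_word u.
Proof.
move=> Hm Em HE Hx; have [N [HN HF]] := periodic_sec_iter_seq F Hm Em.
have HU : forall x, pow_word_id (sec_iter u m x) (N * E).
  move=> x; case: (Hx x) => [H|[f Hf [j ->]]]; first exact: pow_word_id_mul.
  by rewrite mulnC; apply/pow_word_id_mul/pow_word_id_sec_iter_orbit => //; exact: HF.
exists (N * E * m); split; first by rewrite !muln_gt0 HN HE Hm.
case=> [|x v]; first by apply: iter_fix; exact: eval_word_nil.
have Hit : forall k v, iter k (iter m (eval_word u)) (x :: v) =
    x :: iter k (eval_word (sec_iter u m x)) v.
  by elim=> //= k IHk v'; rewrite IHk iter_eval_word_cons // Em.
by rewrite iterM Hit HU.
Qed.

Lemma periodic_of_root_sections : periodic_word u.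
Proof.
have [m [Hm Em]] := A_per (A_root_perm Hu).
case: Hcase => [/(orbit_cover_exponent Hu Em) [E [F [HE HF]]]|/(orbit_cover_support Hu Em) [F HF]].
  exact: periodic_of_orbit_cover HF.
exact: periodic_of_orbit_cover HF.
Qed.
End Step.

Lemma iter_conjA (c a : X -> X) k (z : X) : A c ->
  iter k (conjA c a) z = Defs.finv c (iter k a (c z)).
Proof.
move=> Ac; elim: k => [|k IH] /=; first by rewrite finv_f.
by rewrite IH /conjA finv_spec.
Qed.

Lemma A_iter f n : A f -> A (iter n f).
Proof.
move=> Af; elim: n => [|n IH]; first by rewrite (_ : iter 0 f = id).
by rewrite (_ : iter n.+1 f = f \o iter n f); [exact: A_comp | exact: functional_extensionality].
Qed.

Definition orbit_sec_group (s : X -> X) :=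
  gen (fun f => exists b y, B b /\ Xset x0 A s x0 y /\ f = secA b y).

Lemma orbit_sec_group_secA s b y : B b -> Xset x0 A s x0 y -> orbit_sec_group s (secA b y).
Proof. by move=> Hb Hy; apply: (@gen_mul _ _ id (secA b y) (gen_id _)); exists b, y. Qed.

Lemma orbit_sec_group_orbit (s : X -> X) (b : seq X -> seq X) j : A s -> B b ->
  orbit_sec_group s (sec_perm (LB b) (iter j s x0)).
Proof.
move=> As Hb; rewrite /sec_perm /=; case: eqP => [_|Hz]; first exact: gen_id.
apply: orbit_sec_group_secA => //; exists (conjA id s); split; first by exists id.
by split => //; exists j; rewrite iter_conjA //; exact/esym/(@finv_f id).
Qed.

Hypothesis B_ab : abelian_set B.
Hypothesis orb_ab : strongly_orbitwise_abelian x0 A B.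

Lemma orbit_sec_group_comm s f g : A s -> orbit_sec_group s f -> orbit_sec_group s g -> comm f g.
Proof. by move=> As Hf Hg t; exact: (orb_ab As Hf Hg). Qed.

Lemma secA_comp (f g : seq X -> seq X) (y z : X) : B f -> B g -> y <> x0 ->
  secA (g \o f) y z = secA g y (secA f y z).
Proof.
move=> Bf Bg Hy; rewrite /secA /perm_of /sec /=.
rewrite B_cons // -/(sec f [:: y] [:: z]) B_secx // /=.
by rewrite B_cons // -/(sec g [:: y] _) B_secx.
Qed.

Lemma sec_perm_secA l y : y <> x0 -> sec_perm l y =1 secA (dir_letter l) y.
Proof. by case: l => // b /eqP/negPf Hy z; rewrite /sec_perm /= Hy. Qed.

Lemma secA_fold_dir u y : wordAB u -> y <> x0 ->
  secA (fold_word dir_letter u) y =1 bigcomp (size u) (fun i => sec_perm (nth letter0 u i) y).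
Proof.
move=> + Hy; elim: u => [_ z //|l u IH [Hl Hu] z].
have Bl : B (dir_letter l) by case: l Hl.
by rewrite bigcomp_recl /= -IH // sec_perm_secA // -(secA_comp _ Bl (B_fold_dir Hu) Hy).
Qed.

Lemma lam_bigcomp (beta : seq X -> seq X) (s : X -> X) l : min_period s x0 l ->
  lam x0 beta s =1
  bigcomp l (fun j => if iter j s x0 == x0 then id else secA beta (iter j s x0)).
Proof.
move=> Hl z; have El : ell x0 s = l.
  have [H1 [H2 H3]] := epsilon_spec (inhabits 0%N) (fun n => 0 < n /\ iter n s x0 = x0 /\
     forall m, 0 < m -> iter m s x0 = x0 -> n <= m) (ex_intro _ l Hl).
  by case: Hl => [L1 [L2 L3]]; apply/eqP; rewrite eqn_leq H3 // L3.
rewrite /lam El -bigcomp_foldl; case: Hl => [+ [_ Hmin]]; case: l {El} Hmin => // l Hmin _.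
rewrite bigcomp_recl /= eqxx; apply: eq_bigcomp => k Hk t.
by case: eqP => // /(Hmin k.+1 isT); rewrite ltnS leqNgt Hk.
Qed.

Lemma sec_perm_x0 l : sec_perm l x0 =1 id.
Proof. by case: l => //= b z; rewrite /sec_perm /= eqxx. Qed.

Lemma B_dir_sec_letter l z : inAB l -> B (dir_letter (sec_letter l z)).
Proof. by case: l => //= b Hb; case: eqP. Qed.

Definition commuting_perms (u : seq letter) :=
  forall i j, comm (perm_letter (nth letter0 u i)) (perm_letter (nth letter0 u j)).

(* In the equality case of [ndir_sec_iter_eq] at [x0], every directed letter of [u] is read
   at [x0] exactly once along the orbit of [x0]. *)
Section Landing.
Variables (u : seq letter) (l : nat).
Hypothesis Hu : wordAB u.
Let p := root_perm u.
Let Ap : A p := A_root_perm Hu.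
Hypothesis Hl : min_period p x0 l.
Hypothesis Hland : forall i, i < size u -> is_dir (nth letter0 u i) ->
  exists2 j, j < l & prefix_perm u i (iter j p x0) = x0.

Lemma sec_perm_orbit_group i j :
  orbit_sec_group p (sec_perm (nth letter0 u i) (prefix_perm u i (iter j p x0))).
Proof.
case: (ltnP i (size u)) => [Hi|Hi]; last by rewrite nth_default //; exact: gen_id.
case En: (nth letter0 u i) => [a|b]; rewrite /sec_perm /=; first exact: gen_id.
case: eqP => [_|Hz]; first exact: gen_id.
have Hb : B b by have := inAB_nth i Hu; rewrite En.
apply: orbit_sec_group_secA => //.
have [ji Hji Eji] := Hland Hi (ltac:(by rewrite En)).
(* The vertex is in the orbit of [x0] under [c p c^-1], where [c] fixes [x0]. *)
have [c [Ac [K1 K2]]] := A_inv (A_comp (A_iter ji Ap) (A_root_perm (wordAB_take i Hu))).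
have Ecx : c x0 = x0 by rewrite -{1}Eji; exact: K1.
exists (conjA c p); split; first by exists c.
split => //; exists ((l - ji) + j); rewrite iter_conjA // Ecx.
have -> : Defs.finv c =1 prefix_perm u i \o iter ji p by move=> y; rewrite -{1}(K1 y) finv_f.
rewrite /= -iterD addnA subnKC ?(ltnW Hji) // addnC iterD.
by case: Hl => _ [-> _].
Qed.

Lemma sec_perm_orbit_group_root i j :
  orbit_sec_group p (sec_perm (nth letter0 u i) (iter j p x0)).
Proof.
have := inAB_nth i Hu; case: (nth letter0 u i) => [a|b] /= Hb; first exact: gen_id.
exact: orbit_sec_group_orbit.
Qed.

Lemma dir_sec_iter : fold_word dir_letter (sec_iter u l x0) =1 fold_word dir_letter u.
Proof.
move=> t; rewrite fold_sec_iter (eq_bigcomp (fun j _ => fold_sec_word _ _ _)).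
rewrite exchange_bigcomp; last first.
  move=> i j i' j' t'; apply: B_ab; apply: B_dir_sec_letter; exact: inAB_nth.
rewrite fold_word_bigcomp; apply: eq_bigcomp => i Hi t'.
case En: (nth letter0 u i) => [a|b] /=; first by rewrite bigcomp_id.
rewrite (eq_bigcomp (G := fun j => if prefix_perm u i (iter j p x0) == x0 then b else id));
  last by move=> j _ t''; case: eqP.
apply: bigcomp_pred1.
  by move=> j j' Hj Hj' /eqP E /eqP E'; exact: (hit_x0_unique Hu Hl Hj Hj' E E').
by have [j Hj /eqP Ej] := Hland Hi (ltac:(by rewrite En)); exists j.
Qed.

Hypothesis Hcomm : commuting_perms u.

Lemma comm_prefix_root i : comm (prefix_perm u i) p.
Proof.
move=> s; rewrite !prefix_perm_bigcomp /p !fold_word_bigcomp.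
apply: comm_bigcomp => k _; apply: comm_sym; apply: comm_bigcomp => k' _; exact: Hcomm.
Qed.

(* Since [prefix_perm u i] commutes with [p], its values along the orbit of [x0] are a
   rotation of that orbit, and the sections along it commute. *)
Lemma sec_perm_orbit_rot i : i < size u ->
  bigcomp l (fun j => sec_perm (nth letter0 u i) (prefix_perm u i (iter j p x0))) =1
  bigcomp l (fun j => sec_perm (nth letter0 u i) (iter j p x0)).
Proof.
move=> Hi t; have El : iter l p x0 = x0 by case: Hl => _ [].
case En: (nth letter0 u i) => [a|b]; first by rewrite !bigcomp_id.
have [ji Hji Eji] := Hland Hi (ltac:(by rewrite En)).
have Ep : prefix_perm u i x0 = iter (l - ji) p x0.
  rewrite -{2}Eji (comm_iter ji (comm_prefix_root i)) -iterD subnK ?(ltnW Hji) //.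
  by rewrite -(comm_iter l (comm_prefix_root i)) El.
rewrite (eq_bigcomp (G := fun j => sec_perm (LB b) (iter (j + (l - ji)) p x0))); last first.
  by move=> j _ t'; rewrite (comm_iter j (comm_prefix_root i)) Ep -iterD.
apply: (@bigcomp_rot _ l (l - ji) (fun j => sec_perm (LB b) (iter j p x0))).
  have Hb : B b by have := inAB_nth i Hu; rewrite En.
  by move=> j j'; apply: (orbit_sec_group_comm Ap); exact: orbit_sec_group_orbit Ap Hb.
by move=> j t'; rewrite iterD El.
Qed.

Lemma root_perm_sec_iter : root_perm (sec_iter u l x0) =1 lam x0 (fold_word dir_letter u) p.
Proof.
have Gab := orbit_sec_group_comm Ap.
move=> t; rewrite fold_sec_iter (eq_bigcomp (fun j _ => fold_sec_word _ _ _)).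
rewrite exchange_bigcomp; last by move=> *; apply: Gab; exact: sec_perm_orbit_group.
rewrite (eq_bigcomp (fun i Hi => sec_perm_orbit_rot Hi)) -exchange_bigcomp; last first.
  by move=> *; apply: Gab; exact: sec_perm_orbit_group_root.
rewrite (lam_bigcomp _ Hl); apply: eq_bigcomp => j _ t'; case: eqP => [->|Hj].
  by apply: bigcomp_id => i _; exact: sec_perm_x0.
by rewrite secA_fold_dir.
Qed.
End Landing.

Lemma eval_sec_iter_trivial_root u : wordAB u -> min_period (root_perm u) x0 1 ->
  (forall i, i < size u -> is_dir (nth letter0 u i) -> prefix_perm u i x0 = x0) ->
  eval_word (sec_iter u 1 x0) =1 fold_word dir_letter u.
Proof.
move=> Hu Hl Hland t; rewrite /= fold_word_cat /= fold_sec_word fold_word_bigcomp.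
apply: eq_bigcomp => i Hi t'; case En: (nth letter0 u i) => [a|b] /=; first by case: t'.
by rewrite Hland ?En // eqxx.
Qed.

Hypothesis B_per : periodic B.
Variable e : X -> X -> X.
Hypothesis He : e_choice x0 A e.
Hypothesis Hev : forall b, B b -> eventually_trivial A (Lam x0 e b).

Lemma periodic_word_B (f : seq X -> seq X) u : B f -> eval_word u =1 f -> periodic_word u.
Proof.
move=> Bf E; have [N [HN HP]] := B_per Bf; exists N; split => // t.
by rewrite (eq_iter E).
Qed.

Lemma periodic_word_rooted u : wordAB u -> ndir u = 0 -> periodic_word u.
Proof.
move=> Hu H0; have [HA HE] := rooted_word Hu H0.
have [N [HN HP]] := A_per HA; exists N; split => // t.
by rewrite (eq_iter HE) iter_rooted; case: t => //= x v; rewrite HP.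
Qed.

Lemma lamx_x0 (b : seq X -> seq X) s : lamx x0 e b s x0 = lam x0 b s.
Proof.
have [HeA He0] := He; congr (lam _ _); apply: functional_extensionality => z.
by rewrite /conjA He0 -{1}(He0 (s z)) finv_f //; exact: (proj1 (HeA x0)).
Qed.

Lemma Lam_iter_mono b n (P Q : (X -> X) -> Prop) : (forall f, P f -> Q f) ->
  forall f, iter n (Lam x0 e b) P f -> iter n (Lam x0 e b) Q f.
Proof. elim: n => //= n IH H f [a [x [Ha ->]]]; exists a, x; split => //; exact: IH. Qed.

Section Next.
Variables (u : seq letter) (b0 : seq X -> seq X) (u1 : seq letter) (l : nat).
Hypothesis Hu : wordAB u.
Hypothesis Hform : u = LB b0 :: u1.
Hypothesis Hl : min_period (root_perm u) x0 l.
Hypothesis Hc : ndir (sec_iter u l x0) = ndir u.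

Lemma sec_iter_x0_head : exists u2, sec_iter u l x0 = LB b0 :: u2.
Proof. by case: Hl => [+ _]; case: l => // l' _; rewrite Hform /= eqxx; eexists. Qed.

Lemma commuting_perms_sec_iter_x0 : commuting_perms (sec_iter u l x0).
Proof.
move=> i j; apply: (orbit_sec_group_comm (A_root_perm Hu)); apply: perm_letter_sec_iter;
  by [exact: gen_id | move=> *; apply: (sec_perm_orbit_group Hu Hl); exact: ndir_sec_iter_eq].
Qed.
End Next.

Section Induction.
Variable k : nat.
Hypothesis IHk : forall v, wordAB v -> ndir v < k -> periodic_word v.

(* Each pass to the section at [x0] applies [Lam beta] to the root permutation, so after
   [n] passes it lies in [iter n (Lam beta) [set root_perm u]]. *)
Lemma periodic_word_Lam_iter n : forall u b0 u1 (beta : seq X -> seq X),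
  wordAB u -> u = LB b0 :: u1 -> commuting_perms u -> ndir u = k ->
  fold_word dir_letter u =1 beta ->
  (forall f, iter n (Lam x0 e beta) (fun f' => f' = root_perm u) f -> f =1 id) ->
  periodic_word u.
Proof.
elim: n => [|n IHn] u b0 u1 beta Hu Hform Hcomm Hk Hbeta Htr;
  apply: (periodic_of_root_sections Hu Hform) => [v Hv|l Hl Hc];
  rewrite ?Hk; try exact: IHk; have Hland := ndir_sec_iter_eq Hu Hl Hc.
  have El : l = 1.
    case: Hl => [L1 [_ L3]]; apply/eqP; rewrite eqn_leq L1 andbT.
    by apply: L3 => //; exact: Htr.
  subst l; apply: (periodic_word_B (B_fold_dir Hu)).
  apply: eval_sec_iter_trivial_root => // i Hi /(Hland i Hi) [j].
  by rewrite ltnS leqn0 => /eqP ->.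
have [u2 Hf2] := sec_iter_x0_head Hform Hl.
apply: (IHn _ b0 u2 beta) => //.
- exact: wordAB_sec_iter.
- exact: commuting_perms_sec_iter_x0.
- by rewrite Hc.
- by move=> t; rewrite dir_sec_iter.
move=> f Hf; apply: Htr; rewrite iterSr; apply: Lam_iter_mono Hf => g ->.
exists (root_perm u), x0; split => //; rewrite lamx_x0.
apply: functional_extensionality => z; rewrite (root_perm_sec_iter Hu Hl Hland Hcomm).
by congr (lam _ _ _ _); apply: functional_extensionality.
Qed.

Lemma periodic_word_head_dir u b u' : wordAB u -> u = LB b :: u' -> ndir u = k ->
  periodic_word u.
Proof.
move=> Hu Hform Hk.
apply: (periodic_of_root_sections Hu Hform) => [v Hv|l Hl Hc]; first by rewrite Hk; exact: IHk.
have [u2 Hf] := sec_iter_x0_head Hform Hl.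
have [N HN] := Hev (B_fold_dir Hu) (A_root_perm (wordAB_sec_iter l x0 Hu)).
apply: (@periodic_word_Lam_iter N.+1 _ b u2 (fold_word dir_letter u)) => //.
- exact: wordAB_sec_iter.
- exact: commuting_perms_sec_iter_x0.
- by rewrite Hc.
- exact: dir_sec_iter (ndir_sec_iter_eq Hu Hl Hc).
- exact: HN.
Qed.

Lemma periodic_word_ndir u : wordAB u -> ndir u = k -> periodic_word u.
Proof.
move=> Hu Hk; case: (posnP k) => [Hk0|Hkpos]; first exact: periodic_word_rooted (etrans Hk Hk0).
have [u1 [b [u2 Eu]]] : exists u1 b u2, u = u1 ++ LB b :: u2.
  move: Hkpos; rewrite -Hk; elim: (u) => // -[a|b] w IH /=; last by exists [::], b, w.
  by move=> /IH [u1 [b [u2 ->]]]; exists (LA a :: u1), b, u2.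
move: Hu Hk; rewrite Eu => /wordAB_cat [Hu1 Hu2] Hk.
apply: (periodic_word_rot Hu2); apply: (periodic_word_head_dir (b := b) (u' := u2 ++ u1)) => //.
- by apply/wordAB_cat.
- by rewrite -Hk /ndir !count_cat /= addnC.
Qed.
End Induction.

Lemma periodic_word_all u : wordAB u -> periodic_word u.
Proof.
suff H : forall n w, wordAB w -> ndir w < n -> periodic_word w by move=> Hu; exact: H.
elim=> // n IH w Hw Hn; apply: (periodic_word_ndir (k := ndir w)) => // v Hv Hlt.
by apply: IH => //; exact: leq_trans Hlt _.
Qed.

Lemma CS_group_word g : CS_group A B g -> exists u, wordAB u /\ g =1 eval_word u.
Proof.
elim=> [|g0 s Hg [u [Hu E]] Hs|g0 s s' Hg [u [Hu E]] Hs K1 K2]; first by exists [::].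
  case: Hs => [[a [Ha ->]]|Hb].
    exists (u ++ [:: LA a]); split; first by apply/wordAB_cat.
    by move=> t; rewrite fold_word_cat /= E.
  exists (u ++ [:: LB s]); split; first by apply/wordAB_cat.
  by move=> t; rewrite fold_word_cat /= E.
case: Hs => [[a [Ha Es]]|Hb].
  have [a' [Ha' [L1 L2]]] := A_inv Ha.
  exists (u ++ [:: LA a']); split; first by apply/wordAB_cat.
  move=> t; rewrite fold_word_cat /= -E.
  have Hs : s (rooted a' (g0 t)) = g0 t by rewrite Es; case: (g0 t) => //= x v; rewrite L2.
  by rewrite -{1}Hs K1.
have [b' [Hb' [L1 L2]]] := B_inv Hb.
exists (u ++ [:: LB b']); split; first by apply/wordAB_cat.
by move=> t; rewrite fold_word_cat /= -E -{1}(L2 (g0 t)) K1.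
Qed.

Lemma CS_group_periodic : periodic (CS_group A B).
Proof.
move=> g /CS_group_word [u [Hu E]]; have [N [HN HP]] := periodic_word_all Hu.
by exists N; split => // t; rewrite (eq_iter E).
Qed.
End Words.

Lemma tree_aut_St1_cons (X : Type) (b : seq X -> seq X) x v :
  is_tree_aut b -> in_St1 b -> b (x :: v) = x :: sec b [:: x] v.
Proof.
move=> [_ [_ Hpre]] Hst; have := Hpre [:: x] v; rewrite /= Hst => Et.
by rewrite -[b (x :: v)](cat_take_drop 1) Et.
Qed.

Lemma tree_aut_nil (X : Type) (b : seq X -> seq X) : is_tree_aut b -> b [::] = [::].
Proof. by move=> [_ [Hsz _]]; apply/size0nil; rewrite Hsz. Qed.

(* The letters of a word are compared with [x0]: give an arbitrary type the decidable
   equality of classical logic. *)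
Definition classic_eq_type (X : Type) : Type := X.
Definition classic_eq (X : Type) (x y : classic_eq_type X) : bool :=
  if excluded_middle_informative (x = y) then true else false.
Lemma classic_eqP (X : Type) : Equality.axiom (@classic_eq X).
Proof. by move=> x y; rewrite /classic_eq; case: excluded_middle_informative; constructor. Qed.
HB.instance Definition _ (X : Type) := hasDecEq.Build (classic_eq_type X) (@classic_eqP X).

Theorem theoremA (X : Type) (x0 : X) (A : (X -> X) -> Prop)
  (B : (seq X -> seq X) -> Prop) (e : X -> X -> X) :
  CS_data x0 A B ->
  stable x0 A B ->
  strongly_orbitwise_abelian x0 A B ->
  periodic A ->
  (finite_exponent A \/ finite_support B) ->
  abelian_set B ->
  periodic B ->
  e_choice x0 A e ->
  (forall b, B b -> eventually_trivial A (Lam x0 e b)) ->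
  periodic (CS_group A B).
Proof.
move=> [[A1 [A2 A3]] [_ [_ [[B1 [B2 B3]] [Btree [Bsec0 [Bsecx _]]]]]]] _.
move=> Horb HAp Hcase HBab HBp He Hev.
have Bcons b x v : B b -> b (x :: v) = x :: sec b [:: x] v.
  by move=> /Btree [Hb Hst]; exact: tree_aut_St1_cons.
have Bnil b : B b -> b [::] = [::] by move=> /Btree [Hb _]; exact: tree_aut_nil.
exact: (@CS_group_periodic (classic_eq_type X) x0 A B A1 A2 A3 B1 B2 B3 Bcons Bnil
  (fun b v Hb => Bsec0 b Hb v) (fun b x Hb Hx => proj1 (Bsecx b x Hb Hx))
  (fun b x v Hb Hx => proj2 (Bsecx b x Hb Hx) v) HAp Hcase HBab Horb HBp e He Hev).
Qed.
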